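(* Let $\mathcal{R}$ be any list over $[K]$ and define its attraction gap $$\Delta(\mathcal{R})=\sum_{k=1}^{K-1}\mathbb{1}\{\alpha(\mathcal{R}(k+1))-\alpha(\mathcal{R}(k))>0\}\,(\alpha(\mathcal{R}(k+1))-\alpha(\mathcal{R}(k))).$$ Then $$\sum_{k=1}^K\big(\chi(\mathcal{R}^*,k)\alpha(k)-\chi(\mathcal{R},k)\alpha(\mathcal{R}(k))\big)\le K\chi_{\max}\Delta(\mathcal{R}).$$
   Context: Items are $[K]$; a list $\mathcal{R}$ is an ordering of all $K$ items, $\mathcal{R}(k)$ being the item at position $k$. $\alpha\in[0,1]^K$ are attraction probabilities with $\alpha(1)>\dots>\alpha(K)>0$, and $\chi(\mathcal{R},k)\in[0,1]$ is the examination probability of position $k$ in list $\mathcal{R}$. $\mathcal{R}^*=(1,\dots,K)$ and $\chi_{\max}=\chi(\mathcal{R}^*,1)$. Assumed (among the paper's standing assumptions A1–A5): (A3) $\chi(\mathcal{R},k)\ge\chi(\mathcal{R},\ell)$ for $k<\ell$; (A5) $\chi(\mathcal{R},k)\ge\chi(\mathcal{R}^*,k)$ for all lists $\mathcal{R}$ and positions $k$; and also (A1) $\sum_k\chi(\mathcal{R},k)\alpha(\mathcal{R}(k))\le\sum_k\chi(\mathcal{R}^*,k)\alpha(k)$ for all $\mathcal{R}$, (A2) $\chi(\mathcal{R},k)$ depends only on the set $\{\mathcal{R}(1),\dots,\mathcal{R}(k-1)\}$, (A4) if $\mathcal{R},\mathcal{R}'$ differ only by exchanging the items at positions $k<\ell$,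 then $\alpha(\mathcal{R}(k))\le\alpha(\mathcal{R}(\ell))\iff\chi(\mathcal{R},\ell)\ge\chi(\mathcal{R}',\ell)$. *)

From mathcomp Require Import all_boot all_order all_fingroup all_algebra.
Set Implicit Arguments. Unset Strict Implicit. Unset Printing Implicit Defensive.
Import Order.TTheory GRing.Theory Num.Theory.
Local Open Scope ring_scope.

(* Items and positions are 'I_n.+1 (so K = n.+1, positions 0-indexed).
   A list is a permutation R : {perm 'I_n.+1}; R k is the item at position k.
   The optimal list R^* is the identity permutation 1%g. *)

Definition attraction_gap (F : realFieldType) (n : nat)
  (alpha : 'I_n.+1 -> F) (R : {perm 'I_n.+1}) : F :=
  \sum_(k < n)
    (0 < alpha (R (inord k.+1)) - alpha (R (inord k)))%R%:R *
    (alpha (R (inord k.+1)) - alpha (R (inord k))).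

Definition prefix_set (n : nat) (R : {perm 'I_n.+1}) (k : 'I_n.+1) : {set 'I_n.+1} :=
  [set R i | i : 'I_n.+1 & (i < k)%N].

(* For each position k, assumption (A5) and alpha >= 0 give
   chi(R*,k) alpha(k) - chi(R,k) alpha(R k) <= chi(R*,k) (alpha(k) - alpha(R k)),
   and (A3) gives chi(R*,k) <= chi_max.  Among the k+1 best items some one, say
   R j, sits at a position j >= k; hence alpha(k) <= alpha(R j), and
   alpha(R j) - alpha(R k) telescopes along positions k..j into a sum of
   increments bounded by their positive parts, i.e. by Delta(R). *)

From mathcomp Require Import all_boot all_order all_fingroup all_algebra.
From mathcomp Require Import lra.

Set Implicit Arguments.
Unset Strict Implicit.
Unset Printing Implicit Defensive.
Import Order.TTheory GRing.Theory Num.Theory.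
Local Open Scope ring_scope.

Lemma perm_exists_ge_le (n : nat) (s : {perm 'I_n}) (k : 'I_n) :
  exists j : 'I_n, (k <= j)%N && (s j <= k)%N.
Proof.
apply/existsP; apply: contraT; rewrite negb_exists => /forallP s_lt.
(* Otherwise s^-1 would map the k+1 items 0..k injectively into the positions below k. *)
have lt_k (i : 'I_k.+1) : ((s^-1)%g (widen_ord (ltn_ord k) i) < k)%N.
  have := s_lt ((s^-1)%g (widen_ord (ltn_ord k) i)).
  by rewrite permKV /= -[(i <= k)%N]/(i < k.+1)%N ltn_ord andbT -ltnNge.
have f_inj : injective (fun i => Ordinal (lt_k i)).
  by move=> i1 i2 /(congr1 val) /= /val_inj /perm_inj /(congr1 val) /= /val_inj.
by have := leq_card _ f_inj; rewrite !card_ord ltnn.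
Qed.

Section PositivePart.

Variable F : realFieldType.

Definition pos_part (x : F) : F := (0 < x)%R%:R * x.

Lemma pos_part_ge0 (x : F) : 0 <= pos_part x.
Proof. by rewrite /pos_part; case: ltP => [/ltW|]; rewrite ?mul1r ?mul0r. Qed.

Lemma le_pos_part (x : F) : x <= pos_part x.
Proof. by rewrite /pos_part; case: ltP; rewrite ?mul1r ?mul0r. Qed.

Lemma sub_le_sum_pos_part (f : nat -> F) (k j : nat) : (k <= j)%N ->
  f j - f k <= \sum_(k <= i < j) pos_part (f i.+1 - f i).
Proof.
by move=> le_kj; rewrite -telescope_sumr //; apply: ler_sum => i _; apply: le_pos_part.
Qed.

Lemma sum_subrange_le (g : nat -> F) (k j m : nat) :
  (forall i, 0 <= g i) -> (k <= j)%N -> (j <= m)%N ->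
  \sum_(k <= i < j) g i <= \sum_(0 <= i < m) g i.
Proof.
move=> g_ge0 le_kj le_jm.
rewrite (big_cat_nat (leq0n k) (leq_trans le_kj le_jm)) (big_cat_nat le_kj le_jm) /=.
have head_ge0 : 0 <= \sum_(0 <= i < k) g i by apply: sumr_ge0.
have tail_ge0 : 0 <= \sum_(j <= i < m) g i by apply: sumr_ge0.
lra.
Qed.

End PositivePart.

Section AttractionGap.

Variables (F : realFieldType) (n : nat) (alpha : 'I_n.+1 -> F) (R : {perm 'I_n.+1}).

Let alphaR (i : nat) : F := alpha (R (inord i)).

Lemma attraction_gapE :
  attraction_gap alpha R = \sum_(0 <= i < n) pos_part (alphaR i.+1 - alphaR i).
Proof. by rewrite big_mkord. Qed.

Lemma attraction_gap_ge0 : 0 <= attraction_gap alpha R.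
Proof. by rewrite attraction_gapE; apply: sumr_ge0 => i _; apply: pos_part_ge0. Qed.

Lemma sub_le_attraction_gap (k j : 'I_n.+1) : (k <= j)%N ->
  alpha (R j) - alpha (R k) <= attraction_gap alpha R.
Proof.
move=> le_kj; have le_jn : (j <= n)%N by rewrite -ltnS.
rewrite -[j : 'I_n.+1]inord_val -[k : 'I_n.+1]inord_val attraction_gapE.
apply: le_trans (sub_le_sum_pos_part alphaR le_kj) _.
by apply: sum_subrange_le => // i; apply: pos_part_ge0.
Qed.

Hypothesis alpha_nonincr : forall i j : 'I_n.+1, (i <= j)%N -> alpha j <= alpha i.

Lemma sub_perm_le_attraction_gap (k : 'I_n.+1) :
  alpha k - alpha (R k) <= attraction_gap alpha R.
Proof.
have [j /andP [le_kj le_Rjk]] := perm_exists_ge_le R k.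
have := alpha_nonincr le_Rjk; have := sub_le_attraction_gap le_kj; lra.
Qed.

End AttractionGap.

Theorem lemma2 (F : realFieldType) (n : nat)
  (alpha : 'I_n.+1 -> F)
  (chi : {perm 'I_n.+1} -> 'I_n.+1 -> F)
  (alpha_range : forall i, 0 < alpha i <= 1)
  (alpha_decr : forall i j : 'I_n.+1, (i < j)%N -> alpha j < alpha i)
  (chi_range : forall R k, 0 <= chi R k <= 1)
  (A1 : forall R : {perm 'I_n.+1},
      \sum_(k < n.+1) chi R k * alpha (R k) <= \sum_(k < n.+1) chi 1%g k * alpha k)
  (A2 : forall (R R' : {perm 'I_n.+1}) (k : 'I_n.+1),
      prefix_set R k = prefix_set R' k -> chi R k = chi R' k)
  (A3 : forall R (k l : 'I_n.+1), (k < l)%N -> chi R l <= chi R k)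
  (A4 : forall (R : {perm 'I_n.+1}) (k l : 'I_n.+1), (k < l)%N ->
      (alpha (R k) <= alpha (R l)) = (chi ((tperm k l) * R)%g l <= chi R l))
  (A5 : forall R k, chi 1%g k <= chi R k)
  (R : {perm 'I_n.+1}) :
  \sum_(k < n.+1) (chi 1%g k * alpha k - chi R k * alpha (R k))
    <= n.+1%:R * chi 1%g ord0 * attraction_gap alpha R.
Proof.
have alpha_nonincr (i j : 'I_n.+1) : (i <= j)%N -> alpha j <= alpha i.
  by rewrite leq_eqVlt => /predU1P [/val_inj -> // | /alpha_decr/ltW].
have chi_le_max (k : 'I_n.+1) : chi 1%g k <= chi 1%g ord0.
  case: (posnP k) => [k0 | k_gt0]; last exact: A3.
  by rewrite (_ : k = ord0) //; apply: val_inj.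
rewrite -mulrA mulr_natl.
have -> : chi 1%g ord0 * attraction_gap alpha R *+ n.+1
    = \sum_(k < n.+1) chi 1%g ord0 * attraction_gap alpha R.
  by rewrite sumr_const card_ord.
apply: ler_sum => k _.
have gap_ge0 := attraction_gap_ge0 alpha R.
have gap_bound := sub_perm_le_attraction_gap R alpha_nonincr k.
have /andP [chi_ge0 _] := chi_range 1%g k.
have /andP [alphaRk_gt0 _] := alpha_range (R k).
have := A5 R k; have := chi_le_max k.
nra.
Qed.
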